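(* As $n\to\infty$, $B_2(n,2,3;3)=\Theta(2^n)$.
   Context: For a prime power $q$, $\mathcal{G}_q(n,k)$ denotes the set of all $k$-dimensional subspaces of $\mathbb{F}_q^n$. An $\alpha$-$(n,k,\delta)_q^c$ covering Grassmannian code is a subset $\mathcal{C}\subseteq\mathcal{G}_q(n,k)$ (no repeated codewords) such that every set of $\alpha$ distinct codewords of $\mathcal{C}$ spans a subspace of $\mathbb{F}_q^n$ of dimension at least $k+\delta$. $B_q(n,k,\delta;\alpha)$ denotes the maximum size of an $\alpha$-$(n,k,\delta)_q^c$ code. *)

From HB Require Import structures.
From mathcomp Require Import all_boot all_order all_algebra.
Set Implicit Arguments. Unset Strict Implicit. Unset Printing Implicit Defensive.
Import GRing.Theory.
Import VectorInternalTheory.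

(* Over a finite field, the type of
   subspaces is finite; we equip it with the (sub)finType structure inherited
   from its matrix representation, so that codes can be finite sets of
   subspaces. *)
Section FinVspace.
Variable F : finFieldType.
Variable n : nat.
Notation subsp := {vspace 'rV[F]_n}.
HB.instance Definition _ := [Countable of subsp by <:].
HB.instance Definition _ := [Finite of subsp by <:].
End FinVspace.
Notation subsp F n := {vspace 'rV[F]_n}.

Local Open Scope ring_scope.

Definition covering_code (F : finFieldType) (n k delta alpha : nat)
    (C : {set subsp F n}) : bool :=
  [forall U in C, \dim U == k] &&
  [forall S : {set subsp F n}, ((S \subset C) && (#|S| == alpha)%N) ==>
     (k + delta <= \dim (\sum_(U in S) U)%VS)%N].

(* B_q(n,k,delta;alpha): the maximum size of such a code
   (the empty code is always a code, so the max is attained). *)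
Definition B_cov (F : finFieldType) (n k delta alpha : nat) : nat :=
  \max_(C : {set subsp F n} | @covering_code F n k delta alpha C) #|C|.

From mathcomp Require Import all_boot all_order all_algebra zify.
Set Implicit Arguments. Unset Strict Implicit. Unset Printing Implicit Defensive.
Import GRing.Theory.
Local Open Scope ring_scope.

(* Upper bound: two 2-dimensional codewords sharing a nonzero vector meet
   nontrivially, so three of them span at most 4 < 5 dimensions.  Hence a
   nonzero vector is [vpick U] for at most two codewords U, and |C| <= 2 * 2^n.
   Lower bound: the 2^(n-3) planes <(1,0,a,0), (0,1,0,a)> of F_2^n, for
   a in F_2^(n-3), form a code: for distinct a, b, c the span of three of them
   contains (1,0,a,0), (0,1,0,a), the differences (0,0,a-b,0), (0,0,a-c,0),
   which are independent over F_2, and one shifted difference (0,0,0,a-x) that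
   sticks out beyond the last position where a-b or a-c is nonzero. *)

Section SumOfThree.
Variables (F : fieldType) (vT : vectType F).
Implicit Types (U V W : {vspace vT}) (x : vT).

Lemma dimv_gt0 U x : x != 0 -> x \in U -> (0 < \dim U)%N.
Proof.
move=> nz_x xU; rewrite lt0n dimv_eq0; apply: contraNneq nz_x => U0.
by move: xU; rewrite U0 memv0.
Qed.

(* Each of the two intersections in the modular law contains x. *)
Lemma dimv_sum3_common U V W x : x != 0 -> x \in U -> x \in V -> x \in W ->
  (\dim (U + V + W) + 2 <= \dim U + \dim V + \dim W)%N.
Proof.
move=> nz_x xU xV xW.
have dUV := dimv_sum_cap U V; have dUVW := dimv_sum_cap (U + V)%VS W.
have capUV : (0 < \dim (U :&: V))%N by apply: (dimv_gt0 nz_x); rewrite memv_cap xU.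
have capUVW : (0 < \dim ((U + V) :&: W))%N.
  by apply: (dimv_gt0 nz_x); rewrite memv_cap xW andbT (subvP (addvSl U V)).
lia.
Qed.

End SumOfThree.

Section CoveringCodes.
Variables (F : finFieldType) (n : nat).
Implicit Types (U V W : subsp F n) (C : {set subsp F n}).

Lemma sumv_set3 U V W : (\sum_(Y in [set U; V; W]) Y)%VS = (U + V + W)%VS.
Proof.
apply/eqP; rewrite eqEsubv; apply/andP; split.
  apply/subv_sumP => Y; rewrite !inE => /orP[/orP[]|] /eqP->.
  - exact: subv_trans (addvSl U V) (addvSl _ W).
  - exact: subv_trans (addvSr U V) (addvSl _ W).
  - exact: addvSr.
by rewrite !subv_add !(sumv_sup _ _ (subvv _)) // !inE eqxx ?orbT.
Qed.

Lemma covering_code3P k delta C :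
  covering_code k delta 3 C <->
  {in C, forall U, \dim U = k} /\
  (forall U V W, U \in C -> V \in C -> W \in C -> U != V -> V != W -> W != U ->
     (k + delta <= \dim (U + V + W))%N).
Proof.
split.
  case/andP=> /forall_inP dimC /forallP cov.
  split=> [U /dimC/eqP // | U V W UC VC WC nUV nVW nWU].
  rewrite -sumv_set3; apply: (implyP (cov _)); apply/andP; split.
    by apply/subsetP => Y; rewrite !inE => /orP[/orP[]|] /eqP->.
  by rewrite -setUA cardsU1 cards2 !inE negb_or nUV nVW (eq_sym U W) nWU.
case=> dimC cov; apply/andP; split; first by apply/forall_inP => U /dimC->.
apply/forallP => S; apply/implyP => /andP[/subsetP SC /eqP S3].
have /card_gt2P[U [V [W [[US VS WS] [nUV nVW nWU]]]]] : (2 < #|S|)%N by rewrite S3.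
apply: leq_trans (cov U V W (SC _ US) (SC _ VS) (SC _ WS) nUV nVW nWU) _.
rewrite -sumv_set3; apply/dimvS/subv_sumP => Y UVW_Y; apply: sumv_sup (subvv Y).
by move: UVW_Y; rewrite !inE => /orP[/orP[]|] /eqP->.
Qed.

Lemma card_covering_code3_le k delta C : (0 < k)%N -> (2 * k <= delta.+1)%N ->
  covering_code k delta 3 C -> (#|C| <= 2 * #|{: 'rV[F]_n}|)%N.
Proof.
move=> k_gt0 k_le /covering_code3P[dimC cov].
rewrite mulnC -sum1_card (partition_big (fun U : subsp F n => vpick U) predT) //=.
rewrite -sum_nat_const.
apply: leq_sum => x _; rewrite sum1dep_card leqNgt; apply/negP.
case/card_gt2P => [U [V [W [[]]]]].
rewrite !inE => /andP[UC /eqP xU] /andP[VC /eqP xV] /andP[WC /eqP xW] [nUV nVW nWU].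
have nz_x : x != 0 by rewrite -xU vpick0 -dimv_eq0 dimC // -lt0n.
have picked Y : vpick Y = x -> x \in (Y : {vspace 'rV[F]_n}).
  by move=> <-; apply: memv_pick.
have := dimv_sum3_common nz_x (picked U xU) (picked V xV) (picked W xW).
have := cov U V W UC VC WC nUV nVW nWU.
(* [set] identifies the two copies of [\dim (U + V + W)], whose implicit
   structure instances differ. *)
rewrite (dimC U) ?(dimC V) ?(dimC W) //; set D := \dim _; lia.
Qed.

End CoveringCodes.

Lemma free_cons_coord (F : fieldType) m (x : 'rV[F]_m) (X : seq 'rV[F]_m) j :
  x 0 j != 0 -> all (fun y : 'rV[F]_m => y 0 j == 0) X -> free X -> free (x :: X).
Proof.
move=> nz_xj Xj0 freeX; rewrite free_cons freeX andbT.
apply: contra nz_xj => /(@coord_span _ _ _ (in_tuple X)) ->.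
rewrite summxE big1 // => i _; rewrite !mxE.
by rewrite (eqP (allP Xj0 _ (mem_nth 0 (ltn_ord i)))) mulr0.
Qed.

Section Construction.
Variables (F : fieldType) (k : nat).
Implicit Types a b : 'rV[F]_k.

Definition rv_nth a (i : nat) : F := oapp (fun j : 'I_k => a 0 j) 0 (insub i).

Lemma rv_nth_ord a (j : 'I_k) : rv_nth a j = a 0 j.
Proof. by rewrite /rv_nth valK. Qed.

Lemma rv_nth_out a i : (k <= i)%N -> rv_nth a i = 0.
Proof. by move=> k_le_i; rewrite /rv_nth insubF // ltnNge k_le_i. Qed.

Lemma rv_nthB a b i : rv_nth (a - b) i = rv_nth a i - rv_nth b i.
Proof. by rewrite /rv_nth; case: insubP => [j _ _|_] /=; rewrite ?mxE ?subr0. Qed.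

Definition padv (s : nat) a : 'rV[F]_k.+3 :=
  \row_(i < k.+3) if (s <= i)%N then rv_nth a (i - s) else 0.

Lemma padvB s a b : padv s (a - b) = padv s a - padv s b.
Proof. by apply/rowP => i; rewrite !mxE; case: ifP; rewrite ?rv_nthB ?subr0. Qed.

Lemma padv0 s : padv s 0 = 0.
Proof. by rewrite -(subrr (0 : 'rV[F]_k)) padvB subrr. Qed.

Lemma padv_lt s a (i : 'I_k.+3) : (i < s)%N -> padv s a 0 i = 0.
Proof. by rewrite mxE ltnNge => /negbTE->. Qed.

Lemma padvE s a (i : 'I_k.+3) j : i = s + j :> nat -> padv s a 0 i = rv_nth a j.
Proof. by rewrite mxE => ->; rewrite leq_addr addKn. Qed.

Lemma padv_inj s : (s <= 3)%N -> injective (padv s).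
Proof.
move=> s_le3 a b /rowP ab; apply/rowP => j.
have sj_lt : (s + j < k.+3)%N by have := ltn_ord j; lia.
by have := ab (Ordinal sj_lt); rewrite !(@padvE s _ (Ordinal sj_lt) j) // !rv_nth_ord.
Qed.

Definition idx0 : 'I_k.+3 := Ordinal (isT : 0 < k.+3)%N.
Definition idx1 : 'I_k.+3 := Ordinal (isT : 1 < k.+3)%N.

Definition cw_fst a : 'rV[F]_k.+3 := delta_mx 0 idx0 + padv 2 a.
Definition cw_snd a : 'rV[F]_k.+3 := delta_mx 0 idx1 + padv 3 a.
(* The plane <(1,0,a,0), (0,1,0,a)> of F^(k+3). *)
Definition codeword a : {vspace 'rV[F]_k.+3} := <<[:: cw_fst a; cw_snd a]>>%VS.

Lemma cw_coords a :
  [/\ cw_fst a 0 idx0 = 1, cw_fst a 0 idx1 = 0,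
      cw_snd a 0 idx0 = 0 & cw_snd a 0 idx1 = 1].
Proof. by rewrite /cw_fst /cw_snd !(padv_lt, mxE) //= ?addr0. Qed.

Lemma cw_fstB a b : cw_fst a - cw_fst b = padv 2 (a - b).
Proof. by rewrite padvB opprD addrACA subrr add0r. Qed.

Lemma cw_sndB a b : cw_snd a - cw_snd b = padv 3 (a - b).
Proof. by rewrite padvB opprD addrACA subrr add0r. Qed.

Lemma free_codeword a : free [:: cw_fst a; cw_snd a].
Proof.
have [f0 f1 s0 s1] := cw_coords a.
apply: (free_cons_coord (j := idx0)); first by rewrite f0 oner_eq0.
  by rewrite /= s0 eqxx.
by rewrite seq1_free; apply: contra_neq (oner_neq0 F) => s_eq0; rewrite -s1 s_eq0 mxE.
Qed.

Lemma dim_codeword a : \dim (codeword a) = 2%N.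
Proof. exact/eqP/free_codeword. Qed.

Lemma codeword_inj : injective codeword.
Proof.
move=> a b ab.
have : cw_fst b \in codeword a by rewrite ab memv_span ?mem_head.
rewrite /codeword span_cons span_seq1.
case/memv_addP=> _ /vlineP[c0 ->] [_ /vlineP[c1 ->] def_b].
have [f0 f1 s0 s1] := cw_coords a; have [g0 g1 _ _] := cw_coords b.
have coordE (x y : 'rV[F]_k.+3) j : (c0 *: x + c1 *: y) 0 j = c0 * x 0 j + c1 * y 0 j.
  by rewrite !mxE.
have /rowP/(_ idx0) := def_b; have /rowP/(_ idx1) := def_b.
rewrite !coordE f0 f1 s0 s1 g0 g1 !mulr0 !mulr1 addr0 add0r => c1_0 c0_1.
rewrite -c0_1 -c1_0 scale1r scale0r addr0 /cw_fst in def_b.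
by apply/esym/(padv_inj (s := 2)) => //; apply: addrI def_b.
Qed.

End Construction.

Lemma exists_top_support (F : fieldType) k (a b : 'rV[F]_k) : a != 0 ->
  exists H : 'I_k, [/\ (a 0 H != 0) || (b 0 H != 0),
                      rv_nth a H.+1 = 0 & rv_nth b H.+1 = 0].
Proof.
move=> nz_a; pose P (j : 'I_k) := (a 0 j != 0) || (b 0 j != 0).
have [j0 Pj0] : exists j, P j.
  apply/existsP; apply: contraNT nz_a => /existsPn noP; apply/eqP/rowP => j.
  by move: (noP j); rewrite /P /= negb_or !negbK mxE => /andP[/eqP-> _].
case: (@arg_maxnP _ j0 P val Pj0) => H PH H_max; exists H; split => //.
  all: case: (ltnP H.+1 k) => [lt_Hk | ?]; last by rewrite rv_nth_out.
  all: have : ~~ P (Ordinal lt_Hk) by apply/negP => /H_max; rewrite /= ltnn.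
  all: rewrite /P /= negb_or !negbK !(rv_nth_ord _ (Ordinal lt_Hk)).
  all: by case/andP => /eqP a0 /eqP b0; rewrite ?a0 ?b0.
Qed.

Lemma F2_cases (c : 'F_2) : c = 0 \/ c = 1.
Proof. by case: c => [[|[|]]] //= ?; [left | right]; apply: val_inj. Qed.

Lemma free2_F2 (vT : vectType 'F_2) (u v : vT) :
  u != 0 -> v != 0 -> u != v -> free [:: u; v].
Proof.
move=> nz_u nz_v neq_uv; rewrite free_cons seq1_free nz_v andbT span_seq1.
by apply/vlineP => -[c def_u]; case: (F2_cases c) => c_eq; move: def_u;
  rewrite c_eq ?scale0r ?scale1r => def_u; [move: nz_u | move: neq_uv];
  rewrite def_u eqxx.
Qed.

Lemma card_rV_F2 m : #|{: 'rV['F_2]_m}| = (2 ^ m)%N.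
Proof. by rewrite card_mx card_Fp // mul1n. Qed.

Section BinaryCode.
Variable k : nat.
Implicit Types a b c : 'rV['F_2]_k.

Lemma dim_codeword3 a b c : a != b -> b != c -> c != a ->
  (5 <= \dim (codeword a + codeword b + codeword c))%N.
Proof.
move=> neq_ab neq_bc neq_ca.
set Sum := (codeword a + codeword b + codeword c)%VS.
have sub_Sum x : x \in [:: a; b; c] -> (codeword x <= Sum)%VS.
  rewrite !inE => /or3P[] /eqP->; rewrite /Sum.
  - exact: subv_trans (addvSl _ _) (addvSl _ _).
  - exact: subv_trans (addvSr _ _) (addvSl _ _).
  - exact: addvSr.
have fst_in x : x \in [:: a; b; c] -> cw_fst x \in Sum.
  by move/sub_Sum/subvP; apply; rewrite memv_span ?mem_head.
have snd_in x : x \in [:: a; b; c] -> cw_snd x \in Sum.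
  by move/sub_Sum/subvP; apply; rewrite memv_span // !inE eqxx orbT.
have diff_in x : x \in [:: b; c] ->
    padv 2 (a - x) \in Sum /\ padv 3 (a - x) \in Sum.
  move=> x_in; rewrite -cw_fstB -cw_sndB.
  have xabc : x \in [:: a; b; c] by rewrite inE x_in orbT.
  by split; apply: rpredB; rewrite ?fst_in ?snd_in ?mem_head.
have [H [top_H d_H e_H]] : exists H : 'I_k,
    [/\ ((a - b) 0 H != 0) || ((a - c) 0 H != 0),
        rv_nth (a - b) H.+1 = 0 & rv_nth (a - c) H.+1 = 0].
  by apply: exists_top_support; rewrite subr_eq0.
have [w [w_in w_H]] : exists w, w \in [:: b; c] /\ (a - w) 0 H != 0.
  by case/orP: top_H => ?; [exists b | exists c]; rewrite !inE eqxx ?orbT.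
have H3_lt : (3 + H < k.+3)%N := ltn_ord H.
pose iH : 'I_k.+3 := Ordinal H3_lt.
have padv2_neq x y : x != y -> padv 2 x != padv 2 y by apply/contra_neq/padv_inj.
have [fa0 _ sa0 sa1] := cw_coords a.
have free5 : free [:: cw_fst a; cw_snd a; padv 3 (a - w); padv 2 (a - b); padv 2 (a - c)].
  apply: (free_cons_coord (j := idx0 k)); first by rewrite fa0 oner_eq0.
    by rewrite /= sa0 !padv_lt ?eqxx.
  apply: (free_cons_coord (j := idx1 k)); first by rewrite sa1 oner_eq0.
    by rewrite /= !padv_lt ?eqxx.
  apply: (free_cons_coord (j := iH)).
  - by rewrite (padvE _ (j := H)) // rv_nth_ord.
  - by rewrite /= !(padvE _ (j := H.+1)) // d_H e_H eqxx.
  apply: free2_F2.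
  - by rewrite -(padv0 _ _ 2) padv2_neq // subr_eq0.
  - by rewrite -(padv0 _ _ 2) padv2_neq // subr_eq0 eq_sym.
  - by apply/padv2_neq; apply: contra_neq neq_bc => /addrI/oppr_inj.
apply: leq_trans (eq_leq (esym (eqP free5))) _; apply/dimvS/span_subvP => x.
rewrite !inE => /orP[|/orP[|/orP[|/orP[]]]] /eqP->; rewrite ?fst_in ?snd_in ?mem_head //.
- by case: (diff_in w w_in).
- by case: (diff_in b (mem_head _ _)).
- by case: (diff_in c); rewrite // !inE eqxx orbT.
Qed.

Lemma covering_code_codewords :
  covering_code 2 3 3 [set codeword a | a : 'rV['F_2]_k].
Proof.
apply/covering_code3P; split=> [_ /imsetP[a _ ->] | ]; first exact: dim_codeword.
move=> _ _ _ /imsetP[a _ ->] /imsetP[b _ ->] /imsetP[c _ ->] neq_ab neq_bc neq_ca.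
by apply: dim_codeword3; [move: neq_ab | move: neq_bc | move: neq_ca];
  apply: contra_neq => ->.
Qed.

Lemma card_codewords : #|[set codeword a | a : 'rV['F_2]_k]| = (2 ^ k)%N.
Proof. by rewrite card_imset ?cardsT ?card_rV_F2 //; apply: codeword_inj. Qed.

End BinaryCode.

Theorem mainTheorem9 :
  exists (c1 c2 N : nat), (0 < c1)%N /\ (0 < c2)%N /\
    forall n : nat, (N <= n)%N ->
      (2 ^ n <= c1 * B_cov 'F_2 n 2 3 3)%N /\
      (B_cov 'F_2 n 2 3 3 <= c2 * 2 ^ n)%N.
Proof.
exists 8%N, 2%N, 3%N; split=> //; split=> // -[|[|[|k]]] // _; split.
  have -> : (2 ^ k.+3 = 8 * 2 ^ k)%N by rewrite !expnS !mulnA.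
  rewrite leq_mul2l -(card_codewords k) /=.
  exact: leq_bigmax_cond (covering_code_codewords _).
apply/bigmax_leqP => C /card_covering_code3_le; rewrite card_rV_F2; exact.
Qed.
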